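(* Let $R$ be a tolerance relation on $\{1,\ldots,n\}$ and $A(R)$ its tolerance algebra. The following are equivalent: (i) $A(R)$ is associative; (ii) $A(R)$ is power associative; (iii) $R$ is an equivalence relation.
   Context: A tolerance relation on a set $X$ is a reflexive and symmetric relation $R\subset X\times X$. For $R$ a tolerance relation on $\{1,\ldots,n\}$, the tolerance algebra $A(R)$ is the complex vector space with basis $\{E_{ij}:(i,j)\in R\}$, with bilinear product determined by $E_{ij}\star E_{kl}=\delta_{jk}E_{il}$ if $(i,l)\in R$ and $E_{ij}\star E_{kl}=0$ otherwise (i.e. matrix product followed by setting entries in positions not in $R$ to zero). An algebra is power associative if the subalgebra generated by any single element is associative. *)

From HB Require Import structures.
From mathcomp Require Import all_boot all_order all_algebra.
From mathcomp Require Import complex.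
From mathcomp Require Import Rstruct.
Set Implicit Arguments. Unset Strict Implicit. Unset Printing Implicit Defensive.
Import Order.TTheory GRing.Theory Num.Theory.
Local Open Scope ring_scope.

Definition CC : Type := complex Stdlib.Reals.Rdefinitions.R.

Definition tolerance (n : nat) (R : rel 'I_n) : Prop := reflexive R /\ symmetric R.

(* The tolerance algebra A(R) is realized as the subspace of n x n complex
   matrices supported on R; the basis E_ij, (i,j) in R, is delta_mx i j. *)
Definition inA (n : nat) (R : rel 'I_n) (x : 'M[CC]_n) : Prop :=
  forall i j, ~~ R i j -> x i j = 0.

Definition maskR (n : nat) (R : rel 'I_n) (x : 'M[CC]_n) : 'M[CC]_n :=
  \matrix_(i, j) (if R i j then x i j else 0).

(* The product: matrix product followed by setting entries outside R to zero.
   On basis elements: E_ij * E_kl = delta_jk E_il if (i,l) in R, else 0. *)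
Definition tstar (n : nat) (R : rel 'I_n) (x y : 'M[CC]_n) : 'M[CC]_n :=
  maskR R (x *m y).

Definition tol_associative (n : nat) (R : rel 'I_n) : Prop :=
  forall x y z, inA R x -> inA R y -> inA R z ->
    tstar R (tstar R x y) z = tstar R x (tstar R y z).

Definition tol_subalgebra (n : nat) (R : rel 'I_n) (S : 'M[CC]_n -> Prop) : Prop :=
  (forall x, S x -> inA R x) /\ S 0 /\
  (forall x y, S x -> S y -> S (x + y)) /\
  (forall (c : CC) x, S x -> S (c *: x)) /\
  (forall x y, S x -> S y -> S (tstar R x y)).

Definition gen_subalg (n : nat) (R : rel 'I_n) (x : 'M[CC]_n) (y : 'M[CC]_n) : Prop :=
  forall S, tol_subalgebra R S -> S x -> S y.

Definition tol_power_associative (n : nat) (R : rel 'I_n) : Prop :=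
  forall x, inA R x ->
    forall a b c, gen_subalg R x a -> gen_subalg R x b -> gen_subalg R x c ->
      tstar R (tstar R a b) c = tstar R a (tstar R b c).

Definition is_equivalence (n : nat) (R : rel 'I_n) : Prop :=
  reflexive R /\ symmetric R /\ transitive R.

From mathcomp Require Import all_boot all_order all_algebra.
From mathcomp Require Import complex Rstruct.
Set Implicit Arguments. Unset Strict Implicit. Unset Printing Implicit Defensive.
Import GRing.Theory.
Local Open Scope ring_scope.

(* If R is transitive, A(R) is closed under the ordinary matrix product, which
   therefore coincides with the truncated product on A(R); so A(R) is
   associative, and a fortiori power associative. Conversely, if (i,j) and
   (j,k) lie in R but (i,k) does not, then x = E_ij + E_jk + E_ji satisfies
   x*x = E_ii + E_jj, (x*x)*x = x and x*(x*x) = E_ij + E_ji, so the subalgebra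
   generated by x is not associative. *)

Section ToleranceAlgebra.
Variables (n : nat) (R : rel 'I_n).

Lemma maskR_id x : inA R x -> maskR R x = x.
Proof.
by move=> Ax; apply/matrixP => a b; rewrite mxE; case: ifPn => // /Ax ->.
Qed.

Lemma inA_maskR x : inA R (maskR R x).
Proof. by move=> a b /negbTE nRab; rewrite mxE nRab. Qed.

Lemma inAD x y : inA R x -> inA R y -> inA R (x + y).
Proof. by move=> Ax Ay a b nRab; rewrite mxE Ax // Ay // addr0. Qed.

Lemma tol_subalgebra_inA : tol_subalgebra R (inA R).
Proof.
split=> //; split; first by move=> a b _; rewrite mxE.
split; first exact: inAD.
split; first by move=> c x Ax a b nRab; rewrite mxE Ax // mulr0.
by move=> x y _ _; apply: inA_maskR.
Qed.

Lemma gen_subalg_inA x y : inA R x -> gen_subalg R x y -> inA R y.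
Proof. by move=> Ax; apply; [apply: tol_subalgebra_inA | apply: Ax]. Qed.

Lemma tol_associative_power_associative :
  tol_associative R -> tol_power_associative R.
Proof.
move=> assocR x Ax a b c xa xb xc.
by apply: assocR; apply: gen_subalg_inA Ax _.
Qed.

Section Transitive.
Hypothesis transR : transitive R.

Lemma inA_mulmx x y : inA R x -> inA R y -> inA R (x *m y).
Proof.
move=> Ax Ay a b nRab; rewrite mxE big1 // => l _.
have [Ral|nRal] := boolP (R a l); last by rewrite Ax // mul0r.
have [Rlb|nRlb] := boolP (R l b); last by rewrite Ay // mulr0.
by move: nRab; rewrite (transR Ral Rlb).
Qed.

Lemma tstar_mulmx x y : inA R x -> inA R y -> tstar R x y = x *m y.
Proof. by move=> Ax Ay; rewrite /tstar maskR_id //; apply: inA_mulmx. Qed.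

Lemma transitive_tol_associative : tol_associative R.
Proof.
move=> x y z Ax Ay Az.
by rewrite !tstar_mulmx ?mulmxA //; apply: inA_mulmx.
Qed.

End Transitive.

Lemma tstarDl x y z : tstar R (x + y) z = tstar R x z + tstar R y z.
Proof.
by apply/matrixP => a b; rewrite /tstar mulmxDl !mxE; case: (R a b); rewrite ?addr0.
Qed.

Lemma tstarDr x y z : tstar R x (y + z) = tstar R x y + tstar R x z.
Proof.
by apply/matrixP => a b; rewrite /tstar mulmxDr !mxE; case: (R a b); rewrite ?addr0.
Qed.

Lemma maskR_delta a b :
  maskR R (delta_mx a b) = if R a b then delta_mx a b else 0.
Proof.
apply/matrixP => u v; case: ifPn => Rab; rewrite !mxE.
  by case: (eqVneq u a) => [->|nua]; case: (eqVneq v b) => [->|nvb];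
    rewrite ?Rab ?andbF //; case: ifP.
by case: ifP => // Ruv; case: (eqVneq u a) => [eua|//]; case: (eqVneq v b) => [evb|//];
  move: Rab; rewrite -eua -evb Ruv.
Qed.

Lemma tstar_delta a b c d :
  tstar R (delta_mx a b) (delta_mx c d) =
  if (b == c) && R a d then delta_mx a d else 0.
Proof.
rewrite /tstar mul_delta_mx_cond; case: (b == c) => /=.
  by rewrite mulr1n maskR_delta.
by rewrite mulr0n maskR_id // => u v _; rewrite mxE.
Qed.

Lemma inA_delta a b : R a b -> inA R (delta_mx a b).
Proof. by move=> Rab; have := inA_maskR (delta_mx a b); rewrite maskR_delta Rab. Qed.

Lemma tol_power_associative_transitive :
  tolerance R -> tol_power_associative R -> transitive R.
Proof.
move=> [reflR symR] powR j i k Rij Rjk; apply/idPn => nRik.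
have nij : (i == j) = false by apply/eqP => eij; move: nRik; rewrite eij Rjk.
have njk : (j == k) = false by apply/eqP => ejk; move: nRik; rewrite -ejk Rij.
have nik : (i == k) = false by apply/eqP => eik; move: nRik; rewrite eik reflR.
have nji : (j == i) = false by rewrite eq_sym.
have nkj : (k == j) = false by rewrite eq_sym.
have nki : (k == i) = false by rewrite eq_sym.
have Rji : R j i by rewrite symR.
pose x : 'M[CC]_n := delta_mx i j + delta_mx j k + delta_mx j i.
have Ax : inA R x by rewrite /x; do 2?apply: inAD; apply: inA_delta.
have xx : tstar R x x = delta_mx i i + delta_mx j j.
  rewrite !(tstarDl, tstarDr) !tstar_delta !eqxx ?nij ?njk ?nik ?nji ?nkj ?nki /=.
  by rewrite (negbTE nRik) !reflR !addr0 !add0r.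
have xx_x : tstar R (tstar R x x) x = x.
  rewrite xx !(tstarDl, tstarDr) !tstar_delta !eqxx ?nij ?njk ?nik ?nji ?nkj ?nki /=.
  by rewrite Rij Rjk Rji !addr0 !add0r addrA.
have x_xx : tstar R x (tstar R x x) = delta_mx i j + delta_mx j i.
  rewrite xx !(tstarDl, tstarDr) !tstar_delta !eqxx ?nij ?njk ?nik ?nji ?nkj ?nki /=.
  by rewrite Rij Rji !addr0 !add0r.
have gen_x : gen_subalg R x x by [].
have := powR x Ax x x x gen_x gen_x gen_x; rewrite xx_x x_xx.
move/matrixP/(_ j k); rewrite !mxE !eqxx nji nki /= addr0 !add0r.
by move/eqP; rewrite oner_eq0.
Qed.

End ToleranceAlgebra.

Theorem proposition3p7 (n : nat) (R : rel 'I_n) :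
  tolerance R ->
  (tol_associative R <-> tol_power_associative R) /\
  (tol_power_associative R <-> is_equivalence R).
Proof.
move=> tolR.
have power_equiv : tol_power_associative R -> is_equivalence R.
  move=> powR; have [reflR symR] := tolR.
  split=> //; split=> //; exact: tol_power_associative_transitive.
have equiv_assoc : is_equivalence R -> tol_associative R.
  by move=> [_ [_ transR]]; apply: transitive_tol_associative.
split; split.
- exact: tol_associative_power_associative.
- by move/power_equiv/equiv_assoc.
- exact: power_equiv.
- by move/equiv_assoc/tol_associative_power_associative.
Qed.
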